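(* For every graph $G$, $\operatorname{reg}(G)\le \Delta(G)\,\operatorname{im}(G)$, where $\Delta(G)$ is the maximum degree.
   Context: $\operatorname{reg}(G)=\max\{j\ge0:\widetilde H_{j-1}(\operatorname{Ind}(G[S]);\Bbbk)\neq0\text{ for some }S\subseteq V(G)\}$ over a field $\Bbbk$ ($\operatorname{Ind}$ = independence complex). $\operatorname{im}(G)$ is the induced matching number. *)

From HB Require Import structures.
From mathcomp Require Import all_boot all_order all_algebra.
Set Implicit Arguments. Unset Strict Implicit. Unset Printing Implicit Defensive.
Import GRing.Theory.
Local Open Scope ring_scope.

Definition simple_graph (T : finType) (e : rel T) : Prop :=
  symmetric e /\ irreflexive e.

Section Graphs.
Variables (T : finType) (e : rel T).

Definition independent (sigma : {set T}) : bool :=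
  [forall u in sigma, forall v in sigma, ~~ e u v].

(* faces of Ind(G[S]) : independent subsets of S (the empty set included) *)
Definition ind_face (S sigma : {set T}) : bool :=
  (sigma \subset S) && independent sigma.

Definition max_degree : nat := (\max_(v : T) #|[set u | e v u]|)%N.

Definition induced_matching (M : {set {set T}}) : bool :=
  [forall m in M, exists u, exists v, (u != v) && e u v && (m == [set u; v])] &&
  [forall m1 in M, forall m2 in M, (m1 != m2) ==>
     [forall u in m1, forall v in m2, (u != v) && ~~ e u v]].

Definition induced_matching_number : nat :=
  (\max_(M : {set {set T}} | induced_matching M) #|M|)%N.

Variable F : fieldType.

Local Notation N := #|{set T}|.

(* Boundary map d_j of the augmented (reduced) simplicial chain complex of
   Ind(G[S]) over F, sending chains on j-element faces (dimension j-1) to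
   chains on (j-1)-element faces.  All chain groups are embedded in F^{{set T}}
   (row vectors indexed by subsets of T, mathcomp's row-vector convention
   u *m d). *)
Definition boundary (S : {set T}) (j : nat) : 'M[F]_N :=
  \matrix_(i < N, k < N)
    let sigma := enum_val i in let tau := enum_val k in
    if ind_face S sigma && (#|sigma| == j)%N then
      \sum_(v in sigma | tau == sigma :\ v)
        (-1) ^+ #|[set u in sigma | (enum_rank u < enum_rank v)%N]|
    else 0.

Definition chains (S : {set T}) (j : nat) : 'M[F]_N :=
  \matrix_(i < N, k < N)
    if (i == k) && ind_face S (enum_val i) && (#|enum_val i| == j)%N then 1 else 0.

(* reduced homology \tilde H_{j-1}(Ind(G[S]); F) is nonzero:
   the cycles Z = C_j ∩ ker d_j are not contained in the boundaries B = im d_{j+1} *)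
Definition red_homology_nonzero (S : {set T}) (j : nat) : bool :=
  ~~ ((chains S j :&: kermx (boundary S j)) <= boundary S j.+1)%MS.

(* reg(G) = max { j >= 0 : \tilde H_{j-1}(Ind(G[S]); F) <> 0 for some S }.
   Faces have at most #|T| elements, so j ranges over j <= #|T| + 1
   (chain groups vanish beyond). *)
Definition reg : nat :=
  (\max_(j < #|T|.+2 | [exists S : {set T}, red_homology_nonzero S j]) j)%N.

End Graphs.

(* For a vertex x of S, Ind(G[S]) is the union of the deletion Ind(G[S \ x]) and
   the cone from x over the link Ind(G[S \ N[x]]), so a nonzero class of
   H~_{j-1}(Ind(G[S])) survives either in H~_{j-1}(Ind(G[S \ x])) or in
   H~_{j-2}(Ind(G[S \ N[x]])); when x is isolated the complex is a cone and
   carries no reduced homology.  Deleting the neighbours of x one at a time, x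
   must therefore leave the vertex set through the closed neighbourhood of some
   neighbour y; deleting the remaining neighbours of x afterwards leaves a set U
   avoiding N[x] and N[y] which still carries homology in degree at least
   j - deg x.  Induction on |S| bounds that degree by Delta * im(G[U]), and
   adding the edge xy to an induced matching of G[U] shows im(G[U]) < im(G[S]). *)

From HB Require Import structures.
From mathcomp Require Import all_boot all_order all_algebra.
From mathcomp Require Import ring.
From Stdlib Require Import Classical.
Set Implicit Arguments. Unset Strict Implicit. Unset Printing Implicit Defensive.
Import GRing.Theory.
Local Open Scope ring_scope.

Section Chains.
Variables (T : finType) (F : fieldType).
Implicit Types (s t r : {set T}) (f g : {set T} -> F) (u v x : T).

Definition face_sign v s : F :=
  (-1) ^+ #|[set u in s | (enum_rank u < enum_rank v)%N]|.

(* Chains are functions on vertex sets; [bd] is the boundary map of [boundary]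
   acting on them, see [mulmx_boundary]. *)
Definition bd f t : F := \sum_(v | v \notin t) f (v |: t) * face_sign v (v |: t).

Definition cone x g s : F := if x \in s then face_sign x s * g (s :\ x) else 0.

Definition avoid x f s : F := if x \in s then 0 else f s.

Definition link x f r : F := if x \in r then 0 else face_sign x (x |: r) * f (x |: r).

Lemma face_sign_sqr v s : face_sign v s * face_sign v s = 1.
Proof. by rewrite -expr2 sqrr_sign. Qed.

Lemma face_sign_neq0 v s : face_sign v s != 0.
Proof. by rewrite expf_neq0 // oppr_eq0 oner_eq0. Qed.

Lemma face_signU1 v x s : x \notin s ->
  face_sign v (x |: s) = (-1) ^+ (enum_rank x < enum_rank v)%N * face_sign v s.
Proof.
move=> xs; rewrite /face_sign -exprD; congr (_ ^+ _).
case lt_xv: (enum_rank x < enum_rank v)%N.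
  have -> : [set u in x |: s | (enum_rank u < enum_rank v)%N] =
            x |: [set u in s | (enum_rank u < enum_rank v)%N].
    by apply/setP=> u; rewrite !inE; case: (eqVneq u x) => [->|].
  by rewrite cardsU1 inE (negbTE xs).
rewrite add0n; apply: eq_card => u; rewrite !inE.
by case: (eqVneq u x) => [->|]; rewrite ?lt_xv ?andbF.
Qed.

Lemma face_signU1_self x s : face_sign x (x |: s) = face_sign x s.
Proof.
rewrite /face_sign; congr (_ ^+ _); apply: eq_card => u; rewrite !inE.
by case: (eqVneq u x) => [->|]; rewrite ?ltnn ?andbF.
Qed.

Lemma sign_rank_swap u v : u != v ->
  (-1) ^+ (enum_rank u < enum_rank v)%N * (-1) ^+ (enum_rank v < enum_rank u)%N = -1 :> F.
Proof.
move=> uv; case: (ltngtP (enum_rank u) (enum_rank v)) => [_|_|/val_inj/enum_rank_inj].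
- by rewrite expr1 expr0 mulr1.
- by rewrite expr1 expr0 mul1r.
- by move/eqP; rewrite (negbTE uv).
Qed.

Lemma eq_bd f g : f =1 g -> bd f =1 bd g.
Proof. by move=> fg t; apply: eq_bigr => v _; rewrite fg. Qed.

Lemma bd0 t : bd (fun=> 0) t = 0.
Proof. by rewrite /bd big1 // => v _; rewrite mul0r. Qed.

Lemma bdD f g t : bd (fun s => f s + g s) t = bd f t + bd g t.
Proof. by rewrite /bd -big_split; apply: eq_bigr => v _; rewrite mulrDl. Qed.

Lemma bdB f g t : bd (fun s => f s - g s) t = bd f t - bd g t.
Proof. by rewrite /bd -sumrB; apply: eq_bigr => v _; rewrite mulrBl. Qed.

Lemma bd_cone x g t : bd (cone x g) t = g t - cone x (bd g) t.
Proof.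
rewrite {2}/cone; case: ifPn => [xt | xt]; last first.
  rewrite subr0 /bd (bigD1 x) //= big1 => [|v /andP[_ vx]]; last first.
    by rewrite /cone in_setU1 eq_sym (negbTE vx) (negbTE xt) mul0r.
  by rewrite addr0 /cone setU11 setU1K // mulrC mulrA face_sign_sqr mul1r.
have [r xr ->] : exists2 r : {set T}, x \notin r & t = x |: r.
  by exists (t :\ x); rewrite ?setD11 ?setD1K.
rewrite setU1K // {2}/bd (bigD1 x) //= mulrDr mulrCA face_sign_sqr mulr1.
rewrite opprD addrA subrr add0r /bd mulr_sumr -sumrN.
rewrite (eq_bigl (fun v => (v \notin r) && (v != x))) => [|v]; last first.
  by rewrite in_setU1 negb_or andbC.
apply: eq_bigr => v /andP[vr vx].
have xvr : x \notin v |: r by rewrite in_setU1 negb_or eq_sym vx.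
rewrite /cone setUCA setU11 setU1K // (face_signU1 v xvr) !face_signU1_self.
rewrite (face_signU1 x vr) -!mulrA [g _ * _]mulrCA [face_sign x r * _]mulrCA.
by rewrite !mulrA sign_rank_swap // !mulNr mul1r.
Qed.

Lemma cone_link_avoid x f s : avoid x f s + cone x (link x f) s = f s.
Proof.
rewrite /avoid /cone /link; case: ifPn => xs; last by rewrite addr0.
by rewrite setD11 setD1K // mulrA face_sign_sqr mul1r add0r.
Qed.

Lemma bd_decomp x f t :
  bd f t = bd (avoid x f) t + link x f t - cone x (bd (link x f)) t.
Proof. by rewrite (eq_bd (fun s => esym (cone_link_avoid x f s))) bdD bd_cone addrA. Qed.

Section Cycle.
Variables (x : T) (z : {set T} -> F).
Hypothesis bd_z : forall t, bd z t = 0.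

Lemma bd_avoid t : bd (avoid x z) t = - link x z t.
Proof.
have := bd_decomp x z t; rewrite bd_z /link /cone.
case: ifPn => [xt _ | _]; last by rewrite subr0 => /esym/eqP; rewrite addr_eq0 => /eqP.
by rewrite oppr0 /bd big1 // => v _; rewrite /avoid in_setU1 xt orbT mul0r.
Qed.

Lemma bd_link r : bd (link x z) r = 0.
Proof.
case: (boolP (x \in r)) => xr.
  by rewrite /bd big1 // => v _; rewrite /link in_setU1 xr orbT mul0r.
have := bd_decomp x z (x |: r); rewrite bd_z bd_avoid /link /cone setU11 setU1K //.
rewrite addNr add0r => /esym/eqP.
by rewrite oppr_eq0 mulf_eq0 (negbTE (face_sign_neq0 _ _)) => /eqP.
Qed.

End Cycle.

End Chains.

Section IndependenceComplex.
Variables (T : finType) (e : rel T) (F : fieldType).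
Hypotheses (e_sym : symmetric e) (e_irr : irreflexive e).
Implicit Types (S U A B s t r : {set T}) (f g z c : {set T} -> F) (j k : nat) (u v x y : T).

Definition closed_nbhd x := [set u | (u == x) || e x u].

Lemma independentP s : reflect {in s &, forall u v, ~~ e u v} (independent e s).
Proof.
apply: (iffP forall_inP) => [h u v us vs | h u us].
  by move/forall_inP: (h u us); apply.
by apply/forall_inP => v vs; apply: h.
Qed.

Lemma ind_face_set0 S : ind_face e S set0.
Proof. by rewrite /ind_face sub0set; apply/independentP=> u; rewrite inE. Qed.

Lemma ind_faceS A B s : A \subset B -> ind_face e A s -> ind_face e B s.
Proof. by rewrite /ind_face => AB /andP[sA ->]; rewrite (subset_trans sA AB). Qed.

Lemma ind_face_setD1 S x s : ind_face e S s -> x \notin s -> ind_face e (S :\ x) s.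
Proof.
rewrite /ind_face => /andP[sS ->] xs; rewrite andbT; apply/subsetP=> u us.
by rewrite !inE (subsetP sS) // andbT; apply: contraNneq xs => <-.
Qed.

Lemma ind_face_link S x r :
  ind_face e S (x |: r) -> x \notin r -> ind_face e (S :\: closed_nbhd x) r.
Proof.
move=> /andP[xrS /independentP xr_ind] xr; apply/andP; split; last first.
  by apply/independentP=> u v ur vr; apply: xr_ind; rewrite in_setU1 ?ur ?vr orbT.
apply/subsetP=> u ur; rewrite !inE negb_or (subsetP xrS) ?in_setU1 ?ur ?orbT //.
rewrite xr_ind ?setU11 ?in_setU1 ?ur ?orbT // !andbT.
by apply: contraNneq xr => <-.
Qed.

Lemma ind_face_join S x r :
  x \in S -> ind_face e (S :\: closed_nbhd x) r -> ind_face e S (x |: r).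
Proof.
move=> xS /andP[rS /independentP r_ind].
have rN u : u \in r -> [&& u \in S, u != x & ~~ e x u].
  by move/(subsetP rS); rewrite !inE negb_or andbC andbA.
apply/andP; split.
  by apply/subsetP=> u; rewrite in_setU1 => /orP[/eqP-> // | /rN /and3P[]].
apply/independentP=> u v; rewrite !in_setU1.
case/orP=> [/eqP-> | ur]; case/orP=> [/eqP-> | vr].
- by rewrite e_irr.
- by case/and3P: (rN v vr).
- by rewrite e_sym; case/and3P: (rN u ur).
- exact: r_ind.
Qed.

Lemma setD_closed_nbhd_isolated S x :
  {in S, forall u, ~~ e x u} -> S :\: closed_nbhd x = S :\ x.
Proof.
move=> iso; apply/setP=> u; rewrite !inE negb_or -andbA.
by case: (boolP (u \in S)) => uS; rewrite ?andbF // iso // andbT.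
Qed.

Lemma setD_closed_nbhd_sub S x : S :\: closed_nbhd x \subset S :\ x.
Proof. by apply/subsetP=> u; rewrite !inE negb_or => /andP[/andP[-> _] ->]. Qed.

Definition induced_matching_in U (M : {set {set T}}) :=
  induced_matching e M && [forall m in M, m \subset U].

Definition im_on U := (\max_(M | induced_matching_in U M) #|M|)%N.

Lemma im_on_le U : (im_on U <= induced_matching_number e)%N.
Proof.
apply/bigmax_leqP=> M /andP[iM _].
exact: (@leq_bigmax_cond _ (induced_matching e) (fun M => #|M|) M).
Qed.

Lemma induced_matchingU1 M U x y :
  e x y -> induced_matching e M -> {in M, forall m : {set T}, m \subset U} ->
  U \subset ~: (closed_nbhd x :|: closed_nbhd y) ->
  induced_matching e ([set x; y] |: M).
Proof.
move=> xy /andP[/forall_inP M_edges /forall_inP M_ind] MU Ufar.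
have xy_neq : x != y by apply: contra_eqN xy => /eqP->; rewrite e_irr.
have far m u : m \in M -> u \in m -> [&& u != x, u != y, ~~ e x u & ~~ e y u].
  move=> mM /(subsetP (MU m mM)) /(subsetP Ufar).
  by rewrite !inE !negb_or => /and3P[/andP[-> ->] -> ->].
apply/andP; split.
  apply/forall_inP=> m; rewrite in_setU1 => /orP[/eqP-> | /M_edges //].
  by apply/existsP; exists x; apply/existsP; exists y; rewrite xy_neq xy eqxx.
apply/forall_inP=> m1 m1M; apply/forall_inP=> m2 m2M; apply/implyP=> m12.
apply/forall_inP=> u um1; apply/forall_inP=> v vm2.
move: m1M m2M; rewrite !in_setU1 => /orP[/eqP m1xy | m1M] /orP[/eqP m2xy | m2M].
- by rewrite m1xy m2xy eqxx in m12.
- case/and4P: (far _ _ m2M vm2) => vx vy xv yv.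
  by move: um1; rewrite m1xy !inE => /orP[]/eqP->; rewrite eq_sym ?vx ?vy.
- case/and4P: (far _ _ m1M um1) => ux uy xu yu.
  by move: vm2; rewrite m2xy !inE => /orP[]/eqP->; rewrite e_sym ?ux ?uy.
- by move/forall_inP: (M_ind _ m1M) => /(_ _ m2M) /implyP /(_ m12)
     /forall_inP /(_ _ um1) /forall_inP /(_ _ vm2).
Qed.

Lemma im_on_lt S U x y : x \in S -> y \in S -> e x y ->
  U \subset S :\: (closed_nbhd x :|: closed_nbhd y) -> (im_on U < im_on S)%N.
Proof.
move=> xS yS xy US.
have onU0 : induced_matching_in U set0.
  by apply/andP; split; [apply/andP; split|]; apply/forall_inP=> m; rewrite inE.
rewrite /im_on (bigmax_eq_arg (P := induced_matching_in U) _ onU0).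
case: arg_maxnP => // M /andP[iM /forall_inP MU] _.
have Ufar : U \subset ~: (closed_nbhd x :|: closed_nbhd y).
  by apply: subset_trans US _; rewrite setDE subsetIr.
have xyM : [set x; y] \notin M.
  by apply/negP=> /MU/subsetP/(_ x (set21 x y))/(subsetP Ufar); rewrite !inE eqxx.
apply: leq_trans (leq_bigmax_cond ([set x; y] |: M) _); first by rewrite cardsU1 xyM.
apply/andP; split; first exact: induced_matchingU1 iM MU Ufar.
apply/forall_inP=> m; rewrite in_setU1 => /orP[/eqP-> | /MU mU].
  by apply/subsetP=> u; rewrite !inE => /orP[]/eqP->.
exact: subset_trans mU (subset_trans US (subsetDl _ _)).
Qed.

Definition chain_on S j f := forall s, f s != 0 -> ind_face e S s /\ #|s| = j.

Definition cycle_on S j z := chain_on S j z /\ forall t, bd z t = 0.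

Definition boundary_on S j z := exists2 c, chain_on S j.+1 c & z =1 bd c.

(* Chains are graded by the cardinality of faces, so [homology_nonzero S j]
   means that H~_{j-1}(Ind(G[S])) is nonzero. *)
Definition homology_nonzero S j := exists2 z, cycle_on S j z & ~ boundary_on S j z.

Lemma mulmx_boundary S j (u : 'rV[F]_#|{set T}|) t :
  (u *m boundary e F S j) 0 (enum_rank t) =
  bd (fun s => if ind_face e S s && (#|s| == j) then u 0 (enum_rank s) else 0) t.
Proof.
rewrite mxE (reindex (@enum_rank _)) /=; last exact/onW_bij/enum_rank_bij.
set f := fun s => if ind_face e S s && (#|s| == j) then u 0 (enum_rank s) else 0.
rewrite (eq_bigr (fun s => \sum_(v | (v \in s) && (t == s :\ v)) f s * face_sign F v s))
  => [|s _]; last first.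
  rewrite mxE !enum_rankK /f; case: ifP => _; first by rewrite mulr_sumr.
  by rewrite mulr0 big1 // => v _; rewrite mul0r.
rewrite (exchange_big_dep xpredT) //= /bd [RHS]big_mkcond; apply: eq_bigr => v _.
case: (boolP (v \in t)) => vt /=.
  rewrite big_pred0 // => s; apply/negP=> /andP[vs /eqP ts].
  by move: vt; rewrite ts setD11.
rewrite (big_pred1 (v |: t)) => // s /=.
apply/andP/eqP=> [[vs /eqP->] | ->]; first by rewrite setD1K.
by rewrite setU11 setU1K.
Qed.

Lemma homology_nonzero_red S j : red_homology_nonzero e F S j -> homology_nonzero S j.
Proof.
case/row_subPn=> i; set u := row i _ => u_nB.
pose z s := u 0 (enum_rank s).
have z_restr s : (if ind_face e S s && (#|s| == j) then z s else 0) = z s.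
  case: ifPn => // not_face; rewrite /z.
  have /submxP[v ->] : (u <= chains e F S j)%MS.
    exact: submx_trans (row_sub _ _) (capmxSl _ _).
  rewrite mxE big1 // => k _; rewrite mxE.
  case: (eqVneq k (enum_rank s)) => [->|]; last by rewrite mulr0.
  by rewrite enum_rankK /= (negbTE not_face) mulr0.
exists z; first split.
- by move=> s; rewrite -z_restr; case: ifP => [/andP[-> /eqP]|]; rewrite ?eqxx.
- move=> t; have /sub_kermxP/rowP/(_ (enum_rank t)) : (u <= kermx (boundary e F S j))%MS.
    exact: submx_trans (row_sub _ _) (capmxSr _ _).
  by rewrite mulmx_boundary mxE => <-; apply: eq_bd => s; rewrite z_restr.
move=> [c cS zc]; apply: (negP u_nB); apply/submxP; exists (\row_k c (enum_val k)).
apply/rowP=> k; rewrite -(enum_valK k) mulmx_boundary.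
have -> : u 0 (enum_rank (enum_val k)) = z (enum_val k) by [].
rewrite zc; apply: eq_bd => s; rewrite mxE enum_rankK.
by case: (eqVneq (c s) 0) => [-> | /cS[-> ->]]; rewrite ?eqxx ?if_same.
Qed.

Lemma chain_on0 S j : chain_on S j (fun=> 0).
Proof. by move=> s; rewrite eqxx. Qed.

Lemma chain_onS A B j f : A \subset B -> chain_on A j f -> chain_on B j f.
Proof. by move=> AB fA s /fA[/(ind_faceS AB)]. Qed.

Lemma chain_onD S j f g :
  chain_on S j f -> chain_on S j g -> chain_on S j (fun s => f s + g s).
Proof.
move=> fS gS s; case: (eqVneq (f s) 0) => [-> | /fS //].
by rewrite add0r => /gS.
Qed.

Lemma chain_onB S j f g :
  chain_on S j f -> chain_on S j g -> chain_on S j (fun s => f s - g s).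
Proof.
move=> fS gS s; case: (eqVneq (f s) 0) => [-> | /fS //].
by rewrite sub0r oppr_eq0 => /gS.
Qed.

Lemma chain_on_avoid S j x f : chain_on S j f -> chain_on (S :\ x) j (avoid x f).
Proof.
move=> fS s; rewrite /avoid; case: ifPn => [_ | xs /fS[sS ->]]; first by rewrite eqxx.
by rewrite ind_face_setD1.
Qed.

Lemma chain_on_link S j x f :
  chain_on S j f -> chain_on (S :\: closed_nbhd x) j.-1 (link x f).
Proof.
move=> fS r; rewrite /link; case: ifPn => [_ | xr]; first by rewrite eqxx.
rewrite mulf_eq0 negb_or => /andP[_ /fS[xrS]].
by rewrite cardsU1 xr ind_face_link // => <-.
Qed.

Lemma chain_on_cone S A j x c :
  (forall r, x \notin r -> ind_face e A r -> ind_face e S (x |: r)) ->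
  chain_on A j c -> chain_on S j.+1 (cone x c).
Proof.
move=> join cA s; rewrite /cone; case: ifPn => [xs | _]; last by rewrite eqxx.
rewrite mulf_eq0 negb_or => /andP[_ /cA[sA sj]].
have xs' : x \notin s :\ x by rewrite setD11.
by rewrite -(setD1K xs) join // cardsU1 xs' sj.
Qed.

Lemma cycle_cone_boundary S A j x z :
  (forall r, x \notin r -> ind_face e A r -> ind_face e S (x |: r)) ->
  cycle_on A j z -> boundary_on S j z.
Proof.
move=> join [zA bd_z]; exists (cone x z); first exact: chain_on_cone zA.
by move=> t; rewrite bd_cone /cone bd_z mulr0 if_same subr0.
Qed.

Lemma homology_nonzero_isolated U j x :
  x \in U -> {in U, forall u, ~~ e x u} -> ~ homology_nonzero U j.
Proof.
move=> xU iso [z zU []]; apply: (cycle_cone_boundary (x := x)) zU => r xr rU.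
by apply: ind_face_join; rewrite // setD_closed_nbhd_isolated // ind_face_setD1.
Qed.

Lemma homology_nonzero0 S : homology_nonzero S 0 -> S = set0.
Proof.
case: (set_0Vmem S) => [// | [x xS]] [z [zS bd_z] []].
apply: (cycle_cone_boundary (A := set0) (x := x)) (conj _ bd_z)
  => [r _ /andP[r0 _] | s /zS[_ /eqP]].
  rewrite (_ : r = set0); last by apply/eqP; rewrite -subset0.
  exact: ind_face_join (ind_face_set0 _).
by rewrite cards_eq0 => /eqP->; rewrite cards0 ind_face_set0.
Qed.

Lemma homology_nonzero_set0 j : homology_nonzero set0 j -> j = 0%N.
Proof.
case: j => // j [z [z0 _] []]; exists (fun=> 0) => [|t]; first exact: chain_on0.
rewrite bd0; apply/eqP; apply: contraT => /z0[/andP[t0 _]].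
by rewrite (_ : t = set0) ?cards0 //; apply/eqP; rewrite -subset0.
Qed.

Lemma homology_nonzero_split S j x : x \in S -> homology_nonzero S j ->
  homology_nonzero (S :\ x) j \/ homology_nonzero (S :\: closed_nbhd x) j.-1.
Proof.
move=> xS; case: j => [/homology_nonzero0 S0 | j [z [zS bd_z] z_nbd]].
  by rewrite S0 inE in xS.
(* The link part of [z] is a cycle one degree lower; either it bounds a chain
   [c], and then [avoid x z + c] is a non-bounding cycle of the deletion, or it
   does not bound. *)
have link_cycle : cycle_on (S :\: closed_nbhd x) j (link x z).
  by split; [exact: chain_on_link zS | exact: bd_link].
case: (classic (boundary_on (S :\: closed_nbhd x) j (link x z)))
  => [[c cS link_c] | ]; last by right; exists (link x z).
left; exists (fun s => avoid x z s + c s).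
  split=> [|t]; last by rewrite bdD bd_avoid // link_c addNr.
  exact: chain_onD (chain_on_avoid zS) (chain_onS (setD_closed_nbhd_sub _ _) cS).
move=> [b bS zb]; apply: z_nbd; exists (fun s => b s - cone x c s).
  apply: chain_onB (chain_onS (subsetDl _ _) bS) (chain_on_cone _ cS) => r _.
  exact: ind_face_join.
move=> t; rewrite bdB bd_cone -(cone_link_avoid x z t) -zb /=.
have -> : cone x (link x z) t = cone x (bd c) t by rewrite /cone link_c.
by ring.
Qed.

Lemma homology_nonzero_delete S j y : homology_nonzero S j ->
  exists U k, [/\ U \subset S :\ y, homology_nonzero U k & (j <= k.+1)%N].
Proof.
move=> hS; case: (boolP (y \in S)) => yS.
  case: (homology_nonzero_split yS hS) => h; first by exists (S :\ y), j.
  by exists (S :\: closed_nbhd y), j.-1; rewrite setD_closed_nbhd_sub leqSpred.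
exists S, j; split=> //; apply/subsetP=> u uS; rewrite !inE uS andbT.
by apply: contraNneq yS => <-.
Qed.

Lemma homology_nonzero_remove S j ys : homology_nonzero S j ->
  exists U k, [/\ U \subset S, {in ys, forall u, u \notin U},
                  homology_nonzero U k & (j <= k + size ys)%N].
Proof.
elim: ys S j => [|y ys IH] S j hS; first by exists S, j; rewrite addn0.
have [C [i [CS hC ji]]] := homology_nonzero_delete y hS.
have [U [k [UC Uys hU ik]]] := IH _ _ hC.
have US : U \subset S :\ y := subset_trans UC CS.
exists U, k; split=> //.
- exact: subset_trans US (subsetDl _ _).
- move=> u; rewrite inE => /orP[/eqP-> | /Uys //].
  by apply/negP => /(subsetP US); rewrite setD11.
- by rewrite (leq_trans ji) //= addnS ltnS.
Qed.

Lemma homology_nonzero_peel S j x ys :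
  x \in S -> homology_nonzero S j -> all (e x) ys -> {in S, forall u, e x u -> u \in ys} ->
  exists y U k, [/\ y \in S, e x y, U \subset S :\: (closed_nbhd x :|: closed_nbhd y),
                    homology_nonzero U k & (j <= k + size ys)%N].
Proof.
elim: ys S j => [|y ys IH] S j xS hS /=.
  move=> _ nb_ys; exfalso; apply: homology_nonzero_isolated xS _ hS => u uS.
  by apply/negP => /(nb_ys u uS).
case/andP=> xy ys_nb nb_ys.
have xy_neq : x != y by apply: contra_eqN xy => /eqP->; rewrite e_irr.
have [[C [CS yC xC hC]] | [yS hS']] :
    (exists C : {set T}, [/\ C \subset S, y \notin C, x \in C & homology_nonzero C j]) \/
    y \in S /\ homology_nonzero (S :\: closed_nbhd y) j.-1.
  case: (boolP (y \in S)) => yS; last by left; exists S.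
  case: (homology_nonzero_split yS hS) => h; last by right.
  by left; exists (S :\ y); rewrite subsetDl setD11 in_setD1 xy_neq xS.
- have [|y' [U [k [y'C xy' UC hU jk]]]] := IH C j xC hC ys_nb.
    move=> u uC xu; move: (nb_ys u (subsetP CS u uC) xu).
    by rewrite inE => /orP[/eqP uy | //]; move: uC; rewrite uy (negbTE yC).
  exists y', U, k; split=> //.
  + exact: subsetP CS _ y'C.
  + exact: subset_trans UC (setSD _ CS).
  + by rewrite addnS (leq_trans jk).
- have [U [k [US Uys hU jk]]] := homology_nonzero_remove ys hS'.
  exists y, U, k; split=> //; last by rewrite addnS (leq_trans (leqSpred j)).
  apply/subsetP=> u uU; move: (subsetP US u uU); rewrite !inE !negb_or.
  case/andP=> /andP[uy yu] uS; rewrite uy yu uS !andbT.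
  apply/andP; split; first by apply: contraNneq yu => ->; rewrite e_sym.
  by apply/negP=> /(nb_ys u uS); rewrite inE (negbTE uy) => /Uys; rewrite uU.
Qed.

Lemma homology_nonzero_le S j :
  homology_nonzero S j -> (j <= max_degree e * im_on S)%N.
Proof.
elim: {S}_.+1 {-2}S (ltnSn #|S|) j => // n IH S; rewrite ltnS => leSn j hS.
have [S0 | [x xS]] := set_0Vmem S.
  by move: hS; rewrite S0 => /homology_nonzero_set0 ->.
pose ys := enum [set u in S | e x u].
have [| u uS xu | y [U [k [yS xy US hU jk]]]] := homology_nonzero_peel (ys := ys) xS hS.
- by apply/allP=> u; rewrite mem_enum inE => /andP[].
- by rewrite mem_enum inE uS.
have ltUS : (#|U| < #|S|)%N.
  apply: proper_card; rewrite properE (subset_trans US (subsetDl _ _)) /=.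
  by apply/subsetPn; exists x => //; apply/negP => /(subsetP US); rewrite !inE eqxx.
have deg_x : (size ys <= max_degree e)%N.
  rewrite -cardE; apply: leq_trans _ (leq_bigmax (F := fun v => #|[set u | e v u]|) x).
  by apply: subset_leq_card; apply/subsetP=> u; rewrite !inE => /andP[].
apply: (leq_trans jk); apply: leq_trans (_ : max_degree e * (im_on U).+1 <= _)%N.
  by rewrite mulnS addnC leq_add // IH // (leq_trans ltUS).
by rewrite leq_mul2l (im_on_lt xS yS xy US) orbT.
Qed.

End IndependenceComplex.

Theorem mainTheorem10 (F : fieldType) (T : finType) (e : rel T) :
  simple_graph e ->
  (reg e F <= max_degree e * induced_matching_number e)%N.
Proof.
move=> [e_sym e_irr]; apply/bigmax_leqP=> j /existsP[S /homology_nonzero_red hS].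
apply: leq_trans (homology_nonzero_le e_sym e_irr hS) _.
by rewrite leq_mul2l im_on_le orbT.
Qed.
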